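(* For any graph $F$ on $y\ge 1$ vertices and any real $\lambda>0$, \[ \frac{\lambda Z_F'(\lambda)}{Z_F(\lambda)}\ \ge\ \frac{\log Z_F(\lambda)}{K\bigl(y\lambda/\log Z_F(\lambda)\bigr)}. \]
   Context: $\log$ is the natural logarithm. For a graph $F$, $Z_F(\lambda)=\sum_{I}\lambda^{|I|}$ where the sum is over all independent sets $I$ of $F$ (including $\varnothing$), and $Z_F'$ is its derivative in $\lambda$. $W_{-1}$ denotes the lower (negative real) branch of the Lambert $W$-function, i.e. the inverse of $x\mapsto xe^x$ on $(-\infty,-1]$, defined on $[-1/e,0)$. $K:[1,\infty)\to[1,\infty)$ is $K(y)=-W_{-1}(-1/(ey))$; equivalently, for $y\ge1$, $x=1/(eyK(y))$ is the solution in $(0,1/e]$ of $x\log(1/x)=1/(ey)$. (Note $y\lambda/\log Z_F(\lambda)\ge1$ since $Z_F(\lambda)\le(1+\lambda)^y$.) *)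

From mathcomp Require Import ssreflect ssrfun ssrbool eqtype ssrnat seq choice fintype finset bigop.
From Stdlib Require Import Reals ClassicalEpsilon.

Set Implicit Arguments.
Unset Strict Implicit.

(* A simple graph on vertex set 'I_n is a symmetric irreflexive relation e. *)
Definition independent (n : nat) (e : rel 'I_n) (S : {set 'I_n}) : bool :=
  [forall x in S, forall y in S, ~~ e x y].

Definition Zpoly (n : nat) (e : rel 'I_n) (lam : R) : R :=
  \big[Rplus/R0]_(S : {set 'I_n} | independent e S) (lam ^ #|S|)%R.

(* Lower branch W_{-1} of the Lambert W function on [-1/e,0):
   the unique w <= -1 with w * exp w = z. *)
Definition LambertWm1 (z : R) : R :=
  epsilon (inhabits R0) (fun w : R => (w <= -1 /\ w * exp w = z)%R).

Definition Kfun (y : R) : R := (- LambertWm1 (- / (exp 1 * y)))%R.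

From HB Require Import structures.
From mathcomp Require Import ssreflect ssrfun ssrbool eqtype ssrnat seq choice fintype finset bigop.
From Stdlib Require Import Reals Lra ClassicalEpsilon FunctionalExtensionality.

(* Write Z = Z_F(lam), L = log Z and a = lam Z'(lam) / Z, the mean size of an
   independent set under the hard-core measure.  Since log Z_F is convex in
   log lam, log Z_F(mu) >= L + a (log mu - log lam) for every mu > 0, while
   Z_F(mu) <= (1 + mu)^y <= exp (y mu).  Taking mu = a / y gives, for t = L / a,
   t - log t <= 1 + log (y lam / L) = K - log K with K = K(y lam / L); as
   s - log s is increasing on [1, oo) and K >= 1, this forces t <= K. *)

Local Open Scope R_scope.

HB.instance Definition _ := Monoid.isComLaw.Build R R0 Rplus
  (fun x y z => esym (Rplus_assoc x y z)) Rplus_comm Rplus_0_l.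
HB.instance Definition _ := Monoid.isComLaw.Build R R1 Rmult
  (fun x y z => esym (Rmult_assoc x y z)) Rmult_comm Rmult_1_l.
HB.instance Definition _ := Monoid.isMulLaw.Build R R0 Rmult Rmult_0_l Rmult_0_r.
HB.instance Definition _ :=
  Monoid.isAddLaw.Build R Rmult Rplus Rmult_plus_distr_r Rmult_plus_distr_l.

Lemma ln_le (x y : R) : 0 < x -> x <= y -> ln x <= ln y.
Proof. by move=> x_gt0 [/(ln_increasing _ _ x_gt0)/Rlt_le | ->]; [| right]. Qed.

Lemma ln_div (x y : R) : 0 < x -> 0 < y -> ln (x / y) = ln x - ln y.
Proof. by move=> x_gt0 y_gt0; rewrite ln_mult ?ln_Rinv //; apply: Rinv_0_lt_compat. Qed.

Lemma pow_exp_ln (x : R) (n : nat) : 0 < x -> x ^ n = exp (INR n * ln x).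
Proof. by move=> x_gt0; rewrite -Rpower_pow. Qed.

Lemma le_of_sub_ln_le (s t : R) :
  1 <= s -> 0 < t -> t - ln t <= s - ln s -> t <= s.
Proof.
move=> s_ge1 t_gt0 le_ts; apply: Rnot_lt_le => lt_st.
have ln_ts : ln t - ln s = ln (t / s) by rewrite ln_div //; lra.
have ts_gt1 : 1 < t / s by apply: (Rmult_lt_reg_r s); [lra | field_simplify; lra].
have ln_ts_gt0 : 0 < ln (t / s) by rewrite -ln_1; apply: ln_increasing; lra.
have := exp_ineq1 (ln (t / s)) ltac:(lra).
rewrite exp_ln; last lra.
have : t / s - 1 <= t - s.
  have -> : t / s - 1 = (t - s) / s by field; lra.
  apply: (Rmult_le_reg_r s); [lra | field_simplify; nra].
lra.
Qed.

Section BigSums.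

Variables (I : Type) (r : seq I) (P : pred I).

Lemma derivable_pt_lim_big (f : I -> R -> R) (f' : I -> R) (x : R) :
  (forall i, P i -> derivable_pt_lim (f i) x (f' i)) ->
  derivable_pt_lim (fun t => \big[Rplus/R0]_(i <- r | P i) f i t) x
    (\big[Rplus/R0]_(i <- r | P i) f' i).
Proof.
move=> df; elim: r => [|i s IH].
  have -> : (fun t => \big[Rplus/R0]_(j <- [::] | P j) f j t) = fun=> 0.
    by apply: functional_extensionality => t; rewrite big_nil.
  by rewrite big_nil; apply: derivable_pt_lim_const.
have -> : (fun t => \big[Rplus/R0]_(j <- i :: s | P j) f j t) =
    fun t => (if P i then f i t else 0) + \big[Rplus/R0]_(j <- s | P j) f j t.
  by apply: functional_extensionality => t; rewrite big_cons; case: (P i); lra.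
have -> : \big[Rplus/R0]_(j <- i :: s | P j) f' j =
    (if P i then f' i else 0) + \big[Rplus/R0]_(j <- s | P j) f' j.
  by rewrite big_cons; case: (P i); lra.
apply: derivable_pt_lim_plus IH; case Pi: (P i); first exact: df.
exact: derivable_pt_lim_const.
Qed.

(* Jensen's inequality for exp, through the tangent line exp u >= exp m (1 + u - m). *)
Lemma exp_mean_le (w k : I -> R) (c : R) :
  (forall i, P i -> 0 <= w i) -> 0 < \big[Rplus/R0]_(i <- r | P i) w i ->
  let W := \big[Rplus/R0]_(i <- r | P i) w i in
  let m := \big[Rplus/R0]_(i <- r | P i) (w i * k i) / W in
  W * exp (c * m) <= \big[Rplus/R0]_(i <- r | P i) (w i * exp (c * k i)).
Proof.
move=> w_ge0 W_gt0 W m; rewrite -/W in W_gt0.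
have -> : W * exp (c * m) = \big[Rplus/R0]_(i <- r | P i)
    (exp (c * m) * (w i + c * (w i * k i) + - (c * m) * w i)).
  rewrite -big_distrr !big_split -!big_distrr /= -/W.
  have -> : \big[Rplus/R0]_(i <- r | P i) (w i * k i) = m * W by rewrite /m; field; lra.
  ring.
apply: big_ind2 => [|? ? ? ?|i Pi]; [lra | lra |].
have tangent := exp_ineq1_le (c * k i - c * m).
have -> : exp (c * k i) = exp (c * m) * exp (c * k i - c * m).
  by rewrite -exp_plus; f_equal; ring.
have := Rmult_le_compat_l _ _ _ (w_ge0 i Pi)
  (Rmult_le_compat_l _ _ _ (Rlt_le _ _ (exp_pos (c * m))) tangent).
lra.
Qed.

End BigSums.

Lemma iter_Rmult_pow (x : R) (n : nat) : iter n (Rmult x) 1 = x ^ n.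
Proof. by elim: n => //= n ->. Qed.

Lemma sum_subsets_pow (n : nat) (x : R) :
  \big[Rplus/R0]_(S : {set 'I_n}) x ^ #|S| = (x + 1) ^ n.
Proof.
have := @bigA_distr R R0 R1 Rmult Rplus 'I_n (fun=> x) (fun=> 1).
rewrite big_const card_ord iter_Rmult_pow => ->.
apply: eq_bigr => S _; rewrite -big_mkcond /= big_const iter_Rmult_pow.
by congr (_ ^ _); apply: eq_card => i; rewrite inE.
Qed.

Section IndependencePolynomial.

Context {n : nat} (e : rel 'I_n).

Definition Zmoment (lam : R) : R :=
  \big[Rplus/R0]_(S : {set 'I_n} | independent e S) (lam ^ #|S| * INR #|S|).

Lemma Zpoly_derivE (lam dZ : R) :
  derivable_pt_lim (Zpoly e) lam dZ -> lam * dZ = Zmoment lam.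
Proof.
move=> dZP; have dZE := derivable_pt_lim_big _ (index_enum {set 'I_n}) (independent e)
  (fun S t => t ^ #|S|) _ lam (fun S _ => derivable_pt_lim_pow lam #|S|).
rewrite (uniqueness_limite _ _ _ _ dZP dZE) big_distrr /=.
by apply: eq_bigr => S _; case: #|S| => [|k] /=; ring.
Qed.

Lemma Zpoly_le_exp (mu : R) : 0 <= mu -> Zpoly e mu <= exp (INR n * mu).
Proof.
move=> mu_ge0; apply: Rle_trans (_ : (mu + 1) ^ n <= _).
  rewrite -sum_subsets_pow /Zpoly big_mkcond /=.
  apply: big_ind2 => [|? ? ? ?|S _]; [lra | lra |].
  by case: (independent e S); [lra | apply: pow_le].
have -> : exp (INR n * mu) = exp mu ^ n by rewrite pow_exp_ln ?ln_exp //; apply: exp_pos.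
by apply: pow_incr; have := exp_ineq1_le mu; lra.
Qed.

Lemma Zpoly_ge (lam : R) :
  irreflexive e -> (0 < n)%nat -> 0 < lam -> 1 + lam <= Zpoly e lam.
Proof.
move=> e_irr n_gt0 lam_gt0; pose i0 : 'I_n := Ordinal n_gt0.
have indep0 : independent e set0 by apply/forallP => x; rewrite inE.
have indep1 : independent e [set i0].
  by apply/forallP => x; apply/implyP; rewrite inE => /eqP ->;
     apply/forallP => z; apply/implyP; rewrite inE => /eqP ->; rewrite e_irr.
have neq10 : [set i0] != set0 by apply/set0Pn; exists i0; rewrite inE.
rewrite /Zpoly (bigD1 set0) // (bigD1 [set i0]) /=; last by rewrite indep1.
rewrite cards0 cards1 /= Rmult_1_r.
apply: Rplus_le_compat_l; rewrite -{1}[lam]Rplus_0_r; apply: Rplus_le_compat_l.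
by apply: big_ind => [|? ? ? ?|S _]; [lra | lra | apply: pow_le; lra].
Qed.

Lemma ln_Zpoly_tangent (lam mu : R) : 0 < lam -> 0 < mu -> 0 < Zpoly e lam ->
  ln (Zpoly e lam) + Zmoment lam / Zpoly e lam * (ln mu - ln lam) <= ln (Zpoly e mu).
Proof.
move=> lam_gt0 mu_gt0 Z_gt0.
have := exp_mean_le _ (index_enum {set 'I_n}) (independent e)
  (fun S => lam ^ #|S|) (fun S => INR #|S|) (ln mu - ln lam)
  (fun S _ => pow_le _ _ (Rlt_le _ _ lam_gt0)) Z_gt0.
rewrite -/(Zpoly e lam) -/(Zmoment lam) /=.
have -> : \big[Rplus/R0]_(S | independent e S)
    (lam ^ #|S| * exp ((ln mu - ln lam) * INR #|S|)) = Zpoly e mu.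
  apply: eq_bigr => S _; rewrite !pow_exp_ln // -exp_plus; f_equal; ring.
move=> /(ln_le _ _ (Rmult_lt_0_compat _ _ Z_gt0 (exp_pos _))).
rewrite ln_mult ?ln_exp; [lra | done | exact: exp_pos].
Qed.

End IndependencePolynomial.

(* Intermediate value theorem on [-K, -1] for w e^w, with K = -4 / z: from
   e^K >= (1 + K/2)^2 >= K^2 / 4 one gets K e^-K <= 4 / K = -z. *)
Lemma LambertWm1_exists (z : R) : - / exp 1 <= z < 0 ->
  exists w, w <= -1 /\ w * exp w = z.
Proof.
move=> [z_ge z_lt0].
have e_gt1 : 1 < exp 1 by have := exp_ineq1 1 ltac:(lra); lra.
have inv_e_lt1 : / exp 1 < 1 by have := Rinv_l (exp 1) ltac:(lra); nra.
pose K := - 4 / z.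
have K_ge1 : 1 <= K.
  have : K * - z = 4 by rewrite /K; field; lra.
  nra.
have expK_ge : K * K / 4 <= exp K.
  have -> : exp K = exp (K / 2) * exp (K / 2) by rewrite -exp_plus; f_equal; field.
  by have := exp_ineq1_le (K / 2); nra.
have fK_ge : z <= - K * exp (- K).
  rewrite exp_Ropp; have expK_gt0 := exp_pos K.
  apply: (Rmult_le_reg_r (exp K)) => //; field_simplify; last lra.
  have -> : z * exp K = - 4 * exp K / K by rewrite /K; field; lra.
  apply: (Rmult_le_reg_r K); [lra | field_simplify; nra].
have f1_le : -1 * exp (-1) <= z.
  have -> : exp (-1) = / exp 1 by rewrite -exp_Ropp; f_equal; lra.
  lra.
have f_cont : continuity (fun w => w * exp w - z).
  apply: continuity_minus; last by move=> x; apply: continuity_const.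
  apply: continuity_mult; apply: derivable_continuous;
    [exact: derivable_id | exact: derivable_exp].
have [w [w_in fw0]] := IVT_cor _ (- K) (-1) f_cont ltac:(lra) ltac:(nra).
by exists w; split; lra.
Qed.

Lemma LambertWm1_spec (z : R) : - / exp 1 <= z < 0 ->
  LambertWm1 z <= -1 /\ LambertWm1 z * exp (LambertWm1 z) = z.
Proof. by move/LambertWm1_exists/(epsilon_spec (inhabits R0)). Qed.

Lemma Kfun_spec (u : R) : 1 <= u -> 1 <= Kfun u /\ Kfun u - ln (Kfun u) = 1 + ln u.
Proof.
move=> u_ge1; have e_gt0 := exp_pos 1.
have eu_gt0 : 0 < exp 1 * u by apply: Rmult_lt_0_compat; lra.
have z_in : - / exp 1 <= - / (exp 1 * u) < 0.
  split; last by have := Rinv_0_lt_compat _ eu_gt0; lra.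
  by apply: Ropp_le_contravar; apply: Rinv_le_contravar => //; nra.
have [w_le fixed] := LambertWm1_spec _ z_in.
rewrite /Kfun; set w := LambertWm1 _ in w_le fixed *.
split; first lra.
have : ln (- w * exp w) = ln (/ (exp 1 * u)) by f_equal; lra.
rewrite ln_mult ?ln_exp ?ln_Rinv ?ln_mult ?ln_exp //; [lra | lra | lra | exact: exp_pos].
Qed.

Lemma div_Kfun_le_of_tangent (n lam L a : R) : 0 < n -> 0 < lam -> 0 < L ->
  (forall mu, 0 < mu -> L + a * (ln mu - ln lam) <= n * mu) ->
  L / Kfun (n * lam / L) <= a.
Proof.
move=> n_gt0 lam_gt0 L_gt0 tangent.
have L_le : L <= n * lam by have := tangent lam lam_gt0; lra.
have a_gt0 : 0 < a.
  apply: Rnot_le_lt => a_le0; pose mu := L / (2 * n).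
  have mu_gt0 : 0 < mu by apply: Rdiv_lt_0_compat; lra.
  have mu_lt : mu < lam.
    by apply: (Rmult_lt_reg_r (2 * n)); [lra | rewrite /mu; field_simplify; lra].
  have := ln_increasing _ _ mu_gt0 mu_lt; have := tangent mu mu_gt0.
  have -> : n * mu = L / 2 by rewrite /mu; field; lra.
  nra.
have u_ge1 : 1 <= n * lam / L.
  by apply: (Rmult_le_reg_r L) => //; field_simplify; lra.
have [K_ge1 K_fixed] := Kfun_spec _ u_ge1; set K := Kfun _ in K_ge1 K_fixed *.
have t_le : L / a - ln (L / a) <= K - ln K.
  have ln_u : ln (n * lam / L) = ln n + ln lam - ln L.
    by rewrite ln_div ?ln_mult //; apply: Rmult_lt_0_compat.
  have := tangent (a / n) (Rdiv_lt_0_compat _ _ a_gt0 n_gt0).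
  have -> : n * (a / n) = a by field; lra.
  rewrite K_fixed ln_u !ln_div // => tangent_a.
  apply: (Rmult_le_reg_r a) => //.
  have : L / a * a = L by field; lra.
  lra.
have := le_of_sub_ln_le _ _ K_ge1 (Rdiv_lt_0_compat _ _ L_gt0 a_gt0) t_le.
move=> t_leK; apply: (Rmult_le_reg_r K); first lra.
have -> : L / K * K = L by field; lra.
have : L / a * a = L by field; lra.
nra.
Qed.

Local Close Scope R_scope.

Theorem mainTheorem4 :
  forall (y : nat) (e : rel 'I_y),
    (1 <= y)%N -> symmetric e -> irreflexive e ->
    forall lam : R, (0 < lam)%R ->
    forall dZ : R, derivable_pt_lim (Zpoly e) lam dZ ->
    (lam * dZ / Zpoly e lam >=
       ln (Zpoly e lam) / Kfun (INR y * lam / ln (Zpoly e lam)))%R.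
Proof.
move=> y e y_gt0 _ e_irr lam lam_gt0 dZ dZP.
have Z_ge := Zpoly_ge e lam e_irr y_gt0 lam_gt0.
have lnZ_gt0 : (0 < ln (Zpoly e lam))%R.
  by rewrite -ln_1; apply: ln_increasing; lra.
rewrite (Zpoly_derivE e _ _ dZP); apply: Rle_ge.
apply: div_Kfun_le_of_tangent => // [|mu mu_gt0].
  by apply: lt_0_INR; apply/ltP.
have := ln_Zpoly_tangent e lam mu lam_gt0 mu_gt0 ltac:(lra).
have Zmu_gt0 : (0 < Zpoly e mu)%R by have := Zpoly_ge e mu e_irr y_gt0 mu_gt0; lra.
have := ln_le _ _ Zmu_gt0 (Zpoly_le_exp e mu (Rlt_le _ _ mu_gt0)).
rewrite ln_exp; lra.
Qed.
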